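(* \begin{align*}\kappa_2(\Lambda_1,\Lambda_2)&\le\max\{\mu_c(\Lambda_1,P_M\Phi_1;P_M\Phi_1)+\mu_c(\Lambda_2,P_M\Phi_2;P_M\Phi_1),\ \mu_c(\Lambda_2,P_M\Phi_2;P_M\Phi_2)+\mu_c(\Lambda_1,P_M\Phi_1;P_M\Phi_2)\}\\&=\max\{\mu_c(\Lambda_1,P_M\Phi_1;\Phi_1)+\mu_c(\Lambda_2,P_M\Phi_2;\Phi_1),\ \mu_c(\Lambda_2,P_M\Phi_2;\Phi_2)+\mu_c(\Lambda_1,P_M\Phi_1;\Phi_2)\}.\end{align*}
   Context: Let $\mathcal H$ be a separable Hilbert space with an orthogonal decomposition $\mathcal H=\mathcal H_K\oplus\mathcal H_M$, and let $P_K,P_M$ be the orthogonal projections onto $\mathcal H_K,\mathcal H_M$. Let $\Phi_1=(\phi_{1i})_{i\in I}$ and $\Phi_2=(\phi_{2j})_{j\in J}$ be Parseval frames for $\mathcal H$ with analysis operators $\Phi_1^*f=(\langle f,\phi_{1i}\rangle)_{i\in I}$, $\Phi_2^*f=(\langle f,\phi_{2j}\rangle)_{j\in J}$. $\mathbf 1_\Lambda$ restricts a coefficient sequence to $\Lambda$; $\|\cdot\|_1$ is the (possibly infinite) $\ell^1$ norm. Fix $\Lambda_1\subset I$, $\Lambda_2\subset J$. Joint concentration of the missing part: $\kappa_2(\Lambda_1,\Lambda_2)=\sup_{x,y\in\mathcal H,\ P_Kx=P_Ky}\frac{\|\mathbf 1_{\Lambda_1}\Phi_1^*(x-y)\|_1+\|\mathbf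 1_{\Lambda_2}\Phi_2^*(x-y)\|_1}{\|\Phi_1^*x\|_1+\|\Phi_2^*y\|_1}$. Cluster coherence with projections: for $a,b\in\{1,2\}$ with index sets $I_1=I$, $I_2=J$, and $\Lambda\subset I_a$, $\mu_c(\Lambda,P_M\Phi_a;P_M\Phi_b)=\max_{j\in I_b}\sum_{i\in\Lambda}|\langle P_M\phi_{ai},P_M\phi_{bj}\rangle|$ and $\mu_c(\Lambda,P_M\Phi_a;\Phi_b)=\max_{j\in I_b}\sum_{i\in\Lambda}|\langle P_M\phi_{ai},\phi_{bj}\rangle|$ (suprema if not attained). *)

From HB Require Import structures.
From mathcomp Require Import all_boot all_order all_algebra.
From mathcomp Require Import complex.
From mathcomp Require Import boolp classical_sets functions reals constructive_ereal ereal esum.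

Set Implicit Arguments.
Unset Strict Implicit.
Unset Printing Implicit Defensive.

Import Order.TTheory GRing.Theory Num.Theory.
Local Open Scope ring_scope.
Local Open Scope classical_set_scope.

Definition cabs {R : rcfType} (z : R[i]) : R :=
  Num.sqrt (complex.Re z ^+ 2 + complex.Im z ^+ 2).

Definition ipnorm {R : rcfType} {V : Type} (ip : V -> V -> R[i]) (x : V) : R :=
  Num.sqrt (complex.Re (ip x x)).

Record HilbertSpace (R : realType) := {
  hs_car :> lmodType R[i] ;
  hs_ip : hs_car -> hs_car -> R[i] ;
  hs_ip_linear : forall (a : R[i]) (x y z : hs_car),
      hs_ip (a *: x + y) z = a * hs_ip x z + hs_ip y z ;
  hs_ip_conj : forall x y : hs_car, hs_ip y x = conjc (hs_ip x y) ;
  hs_ip_pos : forall x : hs_car, 0 <= hs_ip x x ;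
  hs_ip_def : forall x : hs_car, hs_ip x x = 0 -> x = 0 ;
  hs_complete : forall u : nat -> hs_car,
      (forall e : R, 0 < e -> exists N : nat, forall n m : nat,
          (N <= n)%N -> (N <= m)%N -> ipnorm hs_ip (u n - u m) < e) ->
      exists l : hs_car, forall e : R, 0 < e -> exists N : nat, forall n : nat,
          (N <= n)%N -> ipnorm hs_ip (u n - l) < e ;
  hs_separable : exists d : nat -> hs_car, forall (x : hs_car) (e : R),
      0 < e -> exists n : nat, ipnorm hs_ip (x - d n) < e
}.

Section Defs.
Variable R : realType.
Variable H : HilbertSpace R.

Local Notation V := (@hs_car _ H).
Local Notation ip := (@hs_ip _ H).
Local Notation nrm := (ipnorm (@hs_ip _ H)).

Definition is_subspace (S : set V) : Prop :=
  S 0 /\ forall (a : R[i]) (x y : V), S x -> S y -> S (a *: x + y).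

Definition orth_decomp (HK HM : set V) : Prop :=
  [/\ is_subspace HK, is_subspace HM,
      (forall k m : V, HK k -> HM m -> ip k m = 0) &
      (forall x : V, exists k m : V, [/\ HK k, HM m & x = k + m])].

Definition orth_proj (S : set V) (P : V -> V) : Prop :=
  forall x : V, S (P x) /\ (forall s : V, S s -> ip (x - P x) s = 0).

Definition parseval_frame (I : choiceType) (phi : I -> V) : Prop :=
  forall f : V,
    (\esum_(i in [set: I]) ((cabs (ip f (phi i))) ^+ 2)%:E)%E = ((nrm f) ^+ 2)%:E.

Definition analysis_op (I : choiceType) (phi : I -> V) (f : V) : I -> R[i] :=
  fun i => ip f (phi i).

Definition l1_restr (I : choiceType) (L : set I) (c : I -> R[i]) : \bar R :=
  (\esum_(i in L) (cabs (c i))%:E)%E.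

Definition l1 (I : choiceType) (c : I -> R[i]) : \bar R := l1_restr [set: I] c.

(* joint concentration of the missing part kappa_2(Lambda1, Lambda2);
   the supremum ranges over the pairs (x, y) for which the quotient is
   defined, i.e. with a finite, nonzero denominator. *)
Definition kappa2 (PK : V -> V) (I J : choiceType) (phi1 : I -> V) (phi2 : J -> V)
    (L1 : set I) (L2 : set J) : \bar R :=
  ereal_sup [set r | exists x y : V,
    let num := (l1_restr L1 (analysis_op phi1 (x - y))
               + l1_restr L2 (analysis_op phi2 (x - y)))%E in
    let den := (l1 (analysis_op phi1 x) + l1 (analysis_op phi2 y))%E in
    [/\ PK x = PK y, (0 < den)%E, (den < +oo)%E & r = (num / den)%E]].

Definition mu_c (I J : choiceType) (L : set I) (g : I -> V) (h : J -> V) : \bar R :=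
  ereal_sup [set (\esum_(i in L) (cabs (ip (g i) (h j)))%:E)%E | j in [set: J]].

End Defs.

From HB Require Import structures.
From mathcomp Require Import all_boot all_order all_algebra.
From mathcomp Require Import complex.
From mathcomp Require Import boolp classical_sets functions reals constructive_ereal ereal esum fsbigop.
From mathcomp Require Import ring lra.
Import Order.TTheory GRing.Theory Num.Theory.
Local Open Scope ring_scope.
Local Open Scope classical_set_scope.

(* Write X = ||Phi1^* x||_1 and Y = ||Phi2^* y||_1 for a pair with P_K x = P_K y.
   Then x - y = P_M x - P_M y and, P_M being self-adjoint,
     |<x - y, psi_j>| <= |<x, P_M psi_j>| + |<y, P_M psi_j>|.
   A Parseval frame Phi yields the Cauchy-Schwarz type bound
     |<x, w>| <= sum_i |<x, phi_i>| |<w, phi_i>|,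
   so exchanging the two sums gives
     sum_{j in Lambda} |<x, P_M psi_j>| <= ||Phi^* x||_1 * mu_c(Lambda, P_M Psi; Phi).
   Summing over Lambda1 and Lambda2 bounds the numerator of kappa_2 by
   X * m1 + Y * m2, where m1, m2 are the two entries of the maximum, hence the
   quotient by X + Y is at most max(m1, m2).  The two maxima agree because
   <P_M u, P_M v> = <P_M u, v>. *)

Section ComplexModulus.
Context {R : rcfType}.

Lemma cabs_normc (z : R[i]) : cabs z = Normc.normc z.
Proof. by case: z. Qed.

Lemma cabs_ge0 (z : R[i]) : 0 <= cabs z.
Proof. exact: sqrtr_ge0. Qed.

Lemma cabs0 : cabs (0 : R[i]) = 0.
Proof. by rewrite cabs_normc Normc.normc0. Qed.

Lemma cabsM (x y : R[i]) : cabs (x * y) = cabs x * cabs y.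
Proof. by rewrite !cabs_normc Normc.normcM. Qed.

Lemma cabsD (x y : R[i]) : cabs (x + y) <= cabs x + cabs y.
Proof. by rewrite !cabs_normc; apply: le_normcD. Qed.

Lemma cabsN (x : R[i]) : cabs (- x) = cabs x.
Proof. by rewrite !cabs_normc; apply: normcN. Qed.

Lemma cabs_sqr (z : R[i]) : cabs z ^+ 2 = complex.Re z ^+ 2 + complex.Im z ^+ 2.
Proof. by rewrite /cabs sqr_sqrtr // addr_ge0 // sqr_ge0. Qed.

Lemma Re_mul_conjc (z : R[i]) : complex.Re (z * conjc z) = cabs z ^+ 2.
Proof. by rewrite cabs_sqr; case: z => a b /=; ring. Qed.

(* Parallelogram-type estimate |a + u|^2 <= |a - u|^2 + 4 |a| |u|, the pointwise
   inequality behind the frame Cauchy-Schwarz bound. *)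
Lemma cabs_shift_sqr (a u : R[i]) :
  cabs (u + a) ^+ 2 <= cabs (- u + a) ^+ 2 + 4 * (cabs a * cabs u).
Proof.
rewrite !cabs_sqr -sqrtrM ?addr_ge0 ?sqr_ge0 //.
case: a => a1 a2; case: u => u1 u2 /=.
have cauchy_schwarz2 :
    a1 * u1 + a2 * u2 <= Num.sqrt ((a1 ^+ 2 + a2 ^+ 2) * (u1 ^+ 2 + u2 ^+ 2)).
  apply: (le_trans (ler_norm _)); rewrite -sqrtr_sqr ler_sqrt; last first.
    by rewrite mulr_ge0 // addr_ge0 // sqr_ge0.
  have : 0 <= (a1 * u2 - a2 * u1) ^+ 2 by rewrite sqr_ge0.
  nra.
nra.
Qed.

End ComplexModulus.

Section InnerProduct.
Context {R : realType} {H : HilbertSpace R}.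
Local Notation ip := (@hs_ip _ H).

Lemma ip0l (z : H) : ip 0 z = 0.
Proof.
have := hs_ip_linear 1 0 0 z; rewrite scale1r addr0 mul1r => h.
by apply: (addrI (ip 0 z)); rewrite -h addr0.
Qed.

Lemma ipDl (x y z : H) : ip (x + y) z = ip x z + ip y z.
Proof. by have := hs_ip_linear 1 x y z; rewrite scale1r mul1r. Qed.

Lemma ipZl (a : R[i]) (x z : H) : ip (a *: x) z = a * ip x z.
Proof. by have := hs_ip_linear a x 0 z; rewrite addr0 ip0l addr0. Qed.

Lemma ipBl (x y z : H) : ip (x - y) z = ip x z - ip y z.
Proof. by rewrite ipDl -scaleN1r ipZl mulN1r. Qed.

Lemma ipDr (x y z : H) : ip x (y + z) = ip x y + ip x z.
Proof. by rewrite (hs_ip_conj (y + z) x) ipDl rmorphD /= -!hs_ip_conj. Qed.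

Lemma ipZr (a : R[i]) (x y : H) : ip x (a *: y) = conjc a * ip x y.
Proof. by rewrite (hs_ip_conj (a *: y) x) ipZl rmorphM /= -hs_ip_conj. Qed.

Lemma ipnorm_sqr (x : H) : ipnorm ip x ^+ 2 = complex.Re (ip x x).
Proof.
have := hs_ip_pos x; rewrite lecE => /andP[_ Re_ge0].
by rewrite /ipnorm sqr_sqrtr.
Qed.

Lemma ip_self_eq0 (x : H) : complex.Re (ip x x) = 0 -> x = 0.
Proof.
move=> Re0; apply: hs_ip_def.
have Im0 : complex.Im (ip x x) = 0.
  by have := hs_ip_pos x; rewrite lecE => /andP[/eqP -> _].
by move: Re0 Im0; case: (ip x x) => a b /= -> ->.
Qed.

(* With c = <x, w>, the vectors x + c w and x - c w differ in squared norm by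
   4 |c|^2; this is the polarization step of the frame Cauchy-Schwarz bound. *)
Lemma ip_shift_self (w x : H) :
  ip (ip x w *: w + x) (ip x w *: w + x) =
  ip ((- ip x w) *: w + x) ((- ip x w) *: w + x) +
  4%:R * (ip x w * conjc (ip x w)).
Proof.
have expand t : ip (t *: w + x) (t *: w + x) =
    t * conjc t * ip w w + t * conjc (ip x w) + conjc t * ip x w + ip x x.
  rewrite hs_ip_linear !ipDr !ipZr (hs_ip_conj x w).
  by rewrite mulrDr mulrA !addrA.
rewrite !expand rmorphN /=.
move: (ip x w) (ip w w) (ip x x) => c a b; ring.
Qed.

End InnerProduct.

Section NonnegativeSums.
Context {R : realType}.

(* A sum of nonnegative terms times a nonnegative constant dominates the sum of
   the scaled terms (equality holds, only this direction is needed). *)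
Lemma esum_mulr_le {T : choiceType} {S : set T} {f : T -> \bar R} {m : \bar R} :
  (0 <= m)%E -> (forall i, 0 <= f i)%E ->
  (\esum_(i in S) (f i * m) <= (\esum_(i in S) f i) * m)%E.
Proof.
move=> m0 f0; apply: ge_ereal_sup => _ [X [finX XS] <-].
rewrite fsbig_finite // -ge0_sume_distrl; last by move=> i _; exact: f0.
apply: lee_wpmul2r => //; apply: ereal_sup_ubound; exists X => //.
by rewrite fsbig_finite.
Qed.

Lemma esum_swap {T1 T2 : choiceType} (S1 : set T1) (S2 : set T2)
    (f : T1 -> T2 -> \bar R) : (forall i j, 0 <= f i j)%E ->
  \esum_(i in S1) \esum_(j in S2) f i j = \esum_(j in S2) \esum_(i in S1) f i j.
Proof.
move=> f0.
rewrite (esum_esum (I := S1) (J := fun _ => S2) (a := f) (fun i j _ _ => f0 i j)).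
rewrite (esum_esum (I := S2) (J := fun _ => S1) (a := fun j i => f i j)
  (fun j i _ _ => f0 i j)).
have -> : S2 `*`` (fun _ => S1) =
    (fun p : T1 * T2 => (p.2, p.1)) @` (S1 `*`` (fun _ => S2)).
  apply/seteqP; split; first by move=> [j i] [/= h1 h2]; exists (i, j).
  by move=> _ [[i j] [/= h1 h2] <-].
by rewrite esum_image // => -[a b] [c d] _ _ /= [-> ->].
Qed.

Lemma ratio_le_maxe (X Y p q n : \bar R) :
  (0 <= X)%E -> (0 <= Y)%E -> (0 < X + Y)%E -> (X + Y < +oo)%E ->
  (0 <= p)%E -> (0 <= q)%E -> (n <= X * p + Y * q)%E ->
  (n / (X + Y) <= maxe p q)%E.
Proof.
move=> X0 Y0 XY0 XYoo p0 q0 hn.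
have XYfin : (X + Y)%E \is a fin_num by rewrite gt0_fin_numE.
have XYpos : 0 < fine (X + Y)%E by rewrite -lte_fin fineK.
rewrite -(fineK XYfin) inver (gt_eqF XYpos) lee_pdivrMr // fineK //.
apply: (le_trans hn); rewrite ge0_muleDr //.
apply: leeD; rewrite [X in (_ <= X)%E]muleC;
  by apply: lee_wpmul2l => //; rewrite le_max lexx ?orbT.
Qed.

End NonnegativeSums.

Section ParsevalFrames.
Context {R : realType} {H : HilbertSpace R}.
Local Notation ip := (@hs_ip _ H).

Lemma l1_ge0 {K : choiceType} (c : K -> R[i]) : (0 <= l1 c)%E.
Proof. by apply: esum_ge0 => i _; rewrite lee_fin cabs_ge0. Qed.

Lemma l1_analysis_op0 {K : choiceType} (psi : K -> H) :
  l1 (analysis_op psi 0) = 0%E.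
Proof. by apply: esum1 => i _; rewrite /analysis_op ip0l cabs0. Qed.

Lemma parseval_inhabited {K : choiceType} {psi : K -> H} {v : H} :
  parseval_frame psi -> v != 0 -> inhabited K.
Proof.
move=> P v0; apply: contra_notP (negP v0) => noK; apply/eqP/ip_self_eq0.
have := P v; rewrite esum1; last by move=> i; case: noK; constructor.
by rewrite ipnorm_sqr => -[].
Qed.

(* Apply the Parseval identity
   to x + c w and x - c w with c = <x, w> and compare termwise by
   cabs_shift_sqr: 4 |c|^2 <= 4 |c| * S. *)
Lemma frame_cauchy_schwarz {K : choiceType} (psi : K -> H) (x w : H) :
  parseval_frame psi ->
  ((cabs (ip x w))%:E <=
   \esum_(k in [set: K]) (cabs (ip x (psi k)) * cabs (ip w (psi k)))%:E)%E.
Proof.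
move=> P; set c := ip x w; set S := (\esum_(k in _) _)%E.
have S0 : (0 <= S)%E by apply: esum_ge0 => k _; rewrite lee_fin mulr_ge0 ?cabs_ge0.
have parseval_Re f : (\esum_(k in [set: K]) (cabs (ip f (psi k)) ^+ 2)%:E)%E =
    (complex.Re (ip f f))%:E by rewrite P ipnorm_sqr.
have shift_bound : ((complex.Re (ip (c *: w + x) (c *: w + x)))%:E <=
    (complex.Re (ip ((- c) *: w + x) ((- c) *: w + x)))%:E + S * (4 * cabs c)%:E)%E.
  rewrite -!parseval_Re; apply: le_trans; last first.
    apply: leeD; first exact: lexx.
    apply: esum_mulr_le; first by rewrite lee_fin mulr_ge0 ?cabs_ge0.
    by move=> k; rewrite lee_fin mulr_ge0 ?cabs_ge0.
  rewrite -esumD; last 2 first.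
  - by move=> k _; rewrite lee_fin sqr_ge0.
  - by move=> k _; rewrite lee_fin !mulr_ge0 ?cabs_ge0.
  apply: le_esum => k _; rewrite -EFinM -EFinD lee_fin !hs_ip_linear.
  have := cabs_shift_sqr (ip x (psi k)) (c * ip w (psi k)).
  by rewrite cabsM mulNr; lra.
have Re_shift (a : R[i]) :
    complex.Re (a + 4%:R * (c * conjc c)) = complex.Re a + 4 * cabs c ^+ 2.
  by rewrite -Re_mul_conjc; case: a => u v; case: (c * conjc c) => a' b /=; ring.
move: shift_bound; rewrite /c ip_shift_self -/c Re_shift.
case: S S0 => [s||] //= S0; last by rewrite leey.
rewrite -!EFinM -EFinD !lee_fin in S0 *.
have := cabs_ge0 c; nra.
Qed.

Lemma frame_l1_bound {K T : choiceType} (psi : K -> H) (L : set T) (g : T -> H)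
    (x : H) (m : \bar R) :
  parseval_frame psi -> (0 <= m)%E ->
  (forall k, \esum_(j in L) (cabs (ip (g j) (psi k)))%:E <= m)%E ->
  (\esum_(j in L) (cabs (ip x (g j)))%:E <= l1 (analysis_op psi x) * m)%E.
Proof.
move=> P m0 col_bound.
apply: (le_trans (le_esum (b := fun j => \esum_(k in setT)
   (cabs (ip x (psi k)) * cabs (ip (g j) (psi k)))%:E) _)).
  by move=> j _; apply: frame_cauchy_schwarz.
rewrite esum_swap; last by move=> j k; rewrite lee_fin mulr_ge0 ?cabs_ge0.
rewrite /l1 /l1_restr /analysis_op.
apply: le_trans _ (esum_mulr_le (f := fun k => (cabs (ip x (psi k)))%:E) m0 _);
  last by move=> k; rewrite lee_fin cabs_ge0.
apply: le_esum => k _.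
have a0 : (0 <= (cabs (ip x (psi k)))%:E)%E by rewrite lee_fin cabs_ge0.
under eq_esum do rewrite EFinM muleC.
apply: le_trans (esum_mulr_le (f := fun j => (cabs (ip (g j) (psi k)))%:E) a0 _) _;
  first by move=> j; rewrite lee_fin cabs_ge0.
rewrite [X in (_ <= X)%E]muleC; apply: lee_wpmul2r => //; exact: col_bound.
Qed.

End ParsevalFrames.

Section Coherence.
Context {R : realType} {H : HilbertSpace R}.
Local Notation ip := (@hs_ip _ H).

Lemma mu_c_ub {K T : choiceType} (L : set T) (g : T -> H) (h : K -> H) (k : K) :
  (\esum_(j in L) (cabs (ip (g j) (h k)))%:E <= mu_c L g h)%E.
Proof. by apply: ereal_sup_ubound; exists k. Qed.

Lemma mu_c_ge0 {K T : choiceType} (L : set T) (g : T -> H) (h : K -> H) (k : K) :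
  (0 <= mu_c L g h)%E.
Proof.
apply: le_trans _ (mu_c_ub L g h k).
by apply: esum_ge0 => j _; rewrite lee_fin cabs_ge0.
Qed.

End Coherence.

Section Projections.
Context {R : realType} {H : HilbertSpace R}.
Local Notation ip := (@hs_ip _ H).

Lemma orth_proj_unique {S : set H} {P : H -> H} {s t : H} :
  is_subspace S -> orth_proj S P -> S s -> (forall s', S s' -> ip t s' = 0) ->
  P (s + t) = s.
Proof.
move=> [_ S_lin] hP Ss t_orth.
have S_diff : S (s - P (s + t)).
  by have := S_lin (-1) _ s (proj1 (hP (s + t))) Ss; rewrite scaleN1r addrC.
have := proj2 (hP (s + t)) _ S_diff.
have -> : s + t - P (s + t) = (s - P (s + t)) + t by rewrite addrAC.
rewrite ipDl t_orth // addr0 => /(congr1 (@complex.Re R)) /ip_self_eq0 /eqP.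
by rewrite subr_eq0 => /eqP.
Qed.

Context {HK HM : set H} {PK PM : H -> H}.
Hypothesis decompKM : orth_decomp HK HM.
Hypothesis projK : orth_proj HK PK.
Hypothesis projM : orth_proj HM PM.

Lemma proj_decomp (x : H) : x = PK x + PM x.
Proof.
case: decompKM => subK subM orthKM dec.
have [k [m [Kk Mm ->]]] := dec x.
rewrite (orth_proj_unique subK projK Kk); last first.
  by move=> s' Ms'; rewrite hs_ip_conj orthKM // rmorph0.
rewrite addrC (orth_proj_unique subM projM Mm) 1?addrC // => s' Ks'.
exact: orthKM.
Qed.

Lemma proj_missing_diff (x y : H) : PK x = PK y -> x - y = PM x - PM y.
Proof.
move=> PKxy; rewrite {1}(proj_decomp x) {1}(proj_decomp y) PKxy.
by rewrite opprD addrACA subrr add0r.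
Qed.

Lemma ip_projM_projM (u v : H) : ip (PM u) (PM v) = ip (PM u) v.
Proof.
rewrite -{2}(subrK (PM v) v) ipDr (hs_ip_conj (v - PM v)).
by rewrite (proj2 (projM v)) ?rmorph0 ?add0r //; exact: proj1 (projM u).
Qed.

Lemma ip_projM_adj (u v : H) : ip (PM u) v = ip u (PM v).
Proof.
rewrite -ip_projM_projM -{2}(subrK (PM u) u) ipDl.
by rewrite (proj2 (projM u)) ?add0r //; exact: proj1 (projM v).
Qed.

Lemma mu_c_projM {K T : choiceType} (L : set T) (g : T -> H) (h : K -> H) :
  mu_c L (PM \o g) (PM \o h) = mu_c L (PM \o g) h.
Proof.
rewrite /mu_c; congr ereal_sup; congr image; apply: funext => k.
by apply: eq_esum => j _ /=; rewrite ip_projM_projM.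
Qed.

Lemma cabs_missing_coeff (x y v : H) : PK x = PK y ->
  cabs (ip (x - y) v) <= cabs (ip x (PM v)) + cabs (ip y (PM v)).
Proof.
move=> PKxy; rewrite proj_missing_diff // ipBl !ip_projM_adj.
by apply: (le_trans (cabsD _ _)); rewrite cabsN.
Qed.

Lemma missing_part_bound {I J K : choiceType} {phi1 : I -> H} {phi2 : J -> H}
    (i0 : I) (j0 : J) (psi : K -> H) (L : set K) {x y : H} :
  parseval_frame phi1 -> parseval_frame phi2 -> PK x = PK y ->
  (l1_restr L (analysis_op psi (x - y)) <=
   l1 (analysis_op phi1 x) * mu_c L (PM \o psi) phi1 +
   l1 (analysis_op phi2 y) * mu_c L (PM \o psi) phi2)%E.
Proof.
move=> P1 P2 PKxy.
apply: le_trans.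
  apply: (le_esum (b := fun j => (cabs (ip x (PM (psi j))))%:E +
                                 (cabs (ip y (PM (psi j))))%:E)%E).
  by move=> j _; rewrite -EFinD lee_fin cabs_missing_coeff.
rewrite esumD; last 2 first.
- by move=> j _; rewrite lee_fin cabs_ge0.
- by move=> j _; rewrite lee_fin cabs_ge0.
apply: leeD; apply: frame_l1_bound => //; try exact: mu_c_ub.
- exact: mu_c_ge0 _ _ _ i0.
- exact: mu_c_ge0 _ _ _ j0.
Qed.

End Projections.

Theorem mainTheorem3 (R : realType) (H : HilbertSpace R) (HK HM : set H)
    (PK PM : H -> H) (I J : choiceType) (phi1 : I -> H) (phi2 : J -> H)
    (L1 : set I) (L2 : set J) :
  orth_decomp HK HM -> orth_proj HK PK -> orth_proj HM PM ->
  parseval_frame phi1 -> parseval_frame phi2 ->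
  let A := maxe (mu_c L1 (PM \o phi1) (PM \o phi1) + mu_c L2 (PM \o phi2) (PM \o phi1))%E
                (mu_c L2 (PM \o phi2) (PM \o phi2) + mu_c L1 (PM \o phi1) (PM \o phi2))%E in
  let B := maxe (mu_c L1 (PM \o phi1) phi1 + mu_c L2 (PM \o phi2) phi1)%E
                (mu_c L2 (PM \o phi2) phi2 + mu_c L1 (PM \o phi1) phi2)%E in
  (kappa2 PK phi1 phi2 L1 L2 <= A)%E /\ A = B.
Proof.
move=> decKM projK projM P1 P2 A B.
have AB : A = B by rewrite /A /B !(mu_c_projM projM).
split=> //; rewrite AB; apply: ge_ereal_sup => _ /= [x [y [PKxy den0 denoo ->]]].
have [v v0] : exists v : H, v != 0.
  case: (eqVneq x 0) => [x0|]; last by exists x.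
  case: (eqVneq y 0) => [y0|]; last by exists y.
  by move: den0; rewrite x0 y0 !l1_analysis_op0 adde0 ltxx.
have [i0] := parseval_inhabited P1 v0; have [j0] := parseval_inhabited P2 v0.
have bound1 := missing_part_bound decKM projK projM i0 j0 phi1 L1 P1 P2 PKxy.
have bound2 := missing_part_bound decKM projK projM i0 j0 phi2 L2 P1 P2 PKxy.
apply: ratio_le_maxe; rewrite ?l1_ge0 ?adde_ge0 ?(mu_c_ge0 _ _ _ i0, mu_c_ge0 _ _ _ j0) //.
apply: (le_trans (leeD bound1 bound2)).
rewrite addeACA -!ge0_muleDr ?(mu_c_ge0 _ _ _ i0, mu_c_ge0 _ _ _ j0) //.
by rewrite [(mu_c L2 _ phi2 + _)%E]addeC.
Qed.
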